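(* Let $1\le b<\frac{n}{2}-1$, and let $T$ be a tree attaining the maximum value of $M_1$ over $\mathcal{CT}^*_{n,b}$, or a tree attaining the maximum value of $M_2$ over $\mathcal{CT}^*_{n,b}$. Then $T$ has a vertex of degree $2$ (i.e. $n_2>0$) if and only if $b<\frac{n-2}{3}$.
   Context: A chemical tree is a tree with maximum degree at most $4$. A branching vertex is a vertex of degree greater than $2$. $\mathcal{CT}^*_{n,b}$ is the class of all $n$-vertex chemical trees with exactly $b$ branching vertices. $n_2$ denotes the number of vertices of degree $2$. $M_1(G)=\sum_v d_v^2$ and $M_2(G)=\sum_{uv\in E(G)}d_ud_v$, where $d_v$ is the degree of $v$. *)

From mathcomp Require Import all_boot.
Set Implicit Arguments. Unset Strict Implicit. Unset Printing Implicit Defensive.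

Definition simple_graph n (e : rel 'I_n) : Prop :=
  irreflexive e /\ symmetric e.

Definition deg n (e : rel 'I_n) (v : 'I_n) : nat := #|[set u | e v u]|.

Definition edges n (e : rel 'I_n) : {set 'I_n * 'I_n} :=
  [set p : 'I_n * 'I_n | (p.1 < p.2) && e p.1 p.2].

Definition is_tree n (e : rel 'I_n) : Prop :=
  simple_graph e /\ (forall x y, connect e x y) /\ #|edges e| = n.-1.

Definition chemical_tree n (e : rel 'I_n) : Prop :=
  is_tree e /\ forall v, deg e v <= 4.

Definition nbranch n (e : rel 'I_n) : nat := #|[set v | 2 < deg e v]|.

Definition n2 n (e : rel 'I_n) : nat := #|[set v | deg e v == 2]|.

Definition in_CT n b (e : rel 'I_n) : Prop := chemical_tree e /\ nbranch e = b.

Definition M1 n (e : rel 'I_n) : nat := \sum_(v : 'I_n) deg e v ^ 2.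
Definition M2 n (e : rel 'I_n) : nat :=
  \sum_(p in edges e) deg e p.1 * deg e p.2.

Definition is_max_CT n b (f : rel 'I_n -> nat) (e : rel 'I_n) : Prop :=
  in_CT b e /\ forall e' : rel 'I_n, in_CT b e' -> f e' <= f e.

From mathcomp Require Import all_boot zify.
Set Implicit Arguments. Unset Strict Implicit. Unset Printing Implicit Defensive.

(** Counting degrees in a chemical tree gives [n + n_3 = 3 b + n_2 + 2]. Hence
    [3 b + 2 < n] forces [n_2 > 0], and if [n_2 > 0] but [n <= 3 b + 2] then
    also [n_3 > 0]. A vertex [v] of degree 2, with neighbours [x] and [y], and a
    vertex [w] of degree 3 then give a better tree in [CT*_{n,b}]: join [x] to
    [y] and hang [v] on [w] as a leaf. Only [v] and [w] change degree (2 to 1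
    and 3 to 4), so [M1] grows by 4, and [M2] grows by
    [sum_{z ~ w} d_z + (d_x - 2)(d_y - 2) >= 3 - 2] when [w] is not [x] or [y]
    (by [sum_{z ~ w} d_z + 2 d_y - 4 > 0] when [w = x]). *)

Section IndicatorSums.
Variable n : nat.
Implicit Types (F : 'I_n -> nat) (G : 'I_n -> 'I_n -> nat).

Lemma sum_eq_muln (j : 'I_n) F : \sum_i (i == j) * F i = F j.
Proof. by rewrite (bigD1 j) //= eqxx mul1n big1 ?addn0 // => i /negbTE ->. Qed.

Lemma sum_eqn (j : 'I_n) : \sum_i (i == j : nat) = 1.
Proof. by rewrite -(sum_eq_muln j (fun _ => 1)); apply: eq_bigr => i _; rewrite muln1. Qed.

Lemma sum_andb_eqn (P : bool) (j : 'I_n) : \sum_i (P && (i == j) : nat) = P.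
Proof.
rewrite -(sum_eq_muln j (fun _ => P : nat)); apply: eq_bigr => i _.
by case: P; case: (i == j).
Qed.

Lemma sum_nat_card (P : pred 'I_n) : \sum_i (P i : nat) = #|[set i | P i]|.
Proof.
by rewrite -sum1_card [RHS]big_mkcond; apply: eq_bigr => i _; rewrite inE; case: (P i).
Qed.

Lemma dsumD G1 G2 :
  \sum_a \sum_b (G1 a b + G2 a b) = \sum_a \sum_b G1 a b + \sum_a \sum_b G2 a b.
Proof. by rewrite -big_split; apply: eq_bigr => a _; rewrite big_split. Qed.

Lemma dsum_row (i : 'I_n) G : \sum_a \sum_b (a == i) * G a b = \sum_b G i b.
Proof.
rewrite -(sum_eq_muln i (fun a => \sum_b G a b)); apply: eq_bigr => a _.
by rewrite big_distrr.
Qed.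

Lemma dsum_col (j : 'I_n) G : \sum_a \sum_b (b == j) * G a b = \sum_a G a j.
Proof. by apply: eq_bigr => a _; rewrite sum_eq_muln. Qed.

Lemma dsum_pt (i j : 'I_n) G : \sum_a \sum_b ((a == i) && (b == j)) * G a b = G i j.
Proof.
transitivity (\sum_a \sum_b (a == i) * ((b == j) * G a b)).
  by apply: eq_bigr => a _; apply: eq_bigr => b _; rewrite mulnA -mulnb.
by rewrite dsum_row sum_eq_muln.
Qed.

End IndicatorSums.

Section Adjacency.
Variables (n : nat) (e : rel 'I_n).
Implicit Types (F : 'I_n -> nat) (G : 'I_n -> 'I_n -> nat).

Lemma deg_sum u : deg e u = \sum_b e u b.
Proof. exact/esym/sum_nat_card. Qed.

Lemma deg_gt0 u v : e u v -> 0 < deg e u.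
Proof. by move=> euv; apply/card_gt0P; exists v; rewrite inE. Qed.

Lemma deg_add_adj_leq F w v :
  (forall b, e w b -> 1 + (b == v) <= F b) -> deg e w + e w v <= \sum_b e w b * F b.
Proof.
move=> Fge; rewrite deg_sum -(sum_eq_muln v (e w)) -big_split /=.
apply: leq_sum => b _; case: (boolP (e w b)) => [ewb|_]; last by rewrite muln0.
by rewrite /= muln1 mul1n; exact: Fge.
Qed.

Definition sorted_pair (a b : 'I_n) := if a < b then (a, b) else (b, a).

Hypotheses (e_irr : irreflexive e) (e_sym : symmetric e).

Lemma mem_edges_sorted a b : a != b -> (sorted_pair a b \in edges e) = e a b.
Proof.
rewrite /sorted_pair; case: ltngtP => [ab|ba|/val_inj ->]; rewrite ?eqxx // inE /=.
- by rewrite ab.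
- by rewrite ba e_sym.
Qed.

Lemma sum_adj_edges G :
  \sum_a \sum_b e a b * G a b = \sum_(p in edges e) (G p.1 p.2 + G p.2 p.1).
Proof.
rewrite pair_big /= big_split /= (bigID (fun p : 'I_n * 'I_n => p.1 < p.2)) /=.
congr (_ + _).
  rewrite big_mkcond [RHS]big_mkcond; apply: eq_bigr => -[a b] _ /=.
  by rewrite inE /=; case: (a < b); case: (e a b); rewrite ?mul1n ?mul0n.
have swapK : involutive (fun p : 'I_n * 'I_n => (p.2, p.1)) by case.
rewrite big_mkcond [RHS]big_mkcond (reindex_inj (inv_inj swapK)).
apply: eq_bigr => -[a b] _ /=; rewrite inE /=.
case: ltngtP => [ab|ba|/val_inj ->] /=; rewrite ?e_irr //.
by rewrite e_sym; case: (e a b); rewrite ?mul1n ?mul0n.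
Qed.

Lemma handshake : \sum_u deg e u = 2 * #|edges e|.
Proof.
under eq_bigr => u _ do rewrite deg_sum -(eq_bigr _ (fun b _ => muln1 (e u b))).
rewrite (sum_adj_edges (fun _ _ => 1)) -sum1_card big_distrr /=.
by apply: eq_bigr => p _; rewrite muln1.
Qed.

Lemma sum_adj_M2 : \sum_a \sum_b e a b * (deg e a * deg e b) = 2 * M2 e.
Proof.
rewrite sum_adj_edges /M2 big_distrr /=; apply: eq_bigr => p _.
by rewrite mulnC addnn mul2n.
Qed.

Lemma sum_adj_bump F v :
  \sum_a \sum_b e a b * ((F a + (a == v)) * (F b + (b == v))) =
  \sum_a \sum_b e a b * (F a * F b) + 2 * \sum_b e v b * F b.
Proof.
have expand a b : e a b * ((F a + (a == v)) * (F b + (b == v))) =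
    e a b * (F a * F b) + (a == v) * (e a b * F b) + (b == v) * (e a b * F a)
    + ((a == v) && (b == v)) * e a b.
  by case: (a == v); case: (b == v); case: (e a b); lia.
under eq_bigr => a _ do under eq_bigr => b _ do rewrite expand.
have colE : \sum_a e a v * F a = \sum_b e v b * F b by apply: eq_bigr => a _; rewrite e_sym.
by rewrite !dsumD dsum_row dsum_col dsum_pt e_irr addn0 colE -addnA addnn mul2n.
Qed.

End Adjacency.

Lemma connect_homo n (e e' : rel 'I_n) (h : 'I_n -> 'I_n) :
  (forall a b, e a b -> connect e' (h a) (h b)) ->
  forall a b, connect e a b -> connect e' (h a) (h b).
Proof.
move=> He a b /connectP [p Hp ->]; elim: p a Hp => [|c p IH] a /=.
  by rewrite connect0.
by case/andP=> eac Hp; apply: connect_trans (He _ _ eac) (IH _ Hp).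
Qed.

Section Connected.
Variables (n : nat) (e : rel 'I_n).

Lemma connect_crossing (S : {set 'I_n}) r u :
  connect e r u -> r \in S -> u \notin S -> exists a b, [/\ a \in S, b \notin S & e a b].
Proof.
move=> /connectP [p Hp ->]; elim: p r Hp => [|c p IH] r /=; first by move=> _ ->.
case/andP=> erc Hp rS uS; case: (boolP (c \in S)) => cS; first exact: IH Hp cS uS.
by exists r, c.
Qed.

Hypothesis e_sym : symmetric e.
Hypothesis e_conn : forall a b, connect e a b.

Lemma connected_edges_geq : n.-1 <= #|edges e|.
Proof.
pose inner (S : {set 'I_n}) := [set p in edges e | (p.1 \in S) && (p.2 \in S)].
suff grow k : k < n -> exists S : {set 'I_n}, #|S| = k.+1 /\ k <= #|inner S|.
  have [n0 | n_gt0] := posnP n; first by have -> : n.-1 = 0 by rewrite n0.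
  have [|S [_ le_inner]] := grow n.-1; first by rewrite ltn_predL.
  apply: leq_trans le_inner (subset_leq_card _).
  by apply/subsetP => p; rewrite inE => /andP[].
elim: k => [n_gt0 | k IH lt_k].
  by exists [set Ordinal n_gt0]; rewrite cards1.
have [S [cS le_inner]] := IH (ltnW lt_k).
have /card_gt0P [r rS] : 0 < #|S| by rewrite cS.
have /subsetPn [u _ uS] : ~~ ([set: 'I_n] \subset S).
  by apply: contraTN lt_k => /subset_leq_card; rewrite cardsT card_ord cS; lia.
have [a [b [aS bS eab]]] := connect_crossing (e_conn r u) rS uS.
have ab : a != b by apply: contraNneq bS => <-.
pose p := sorted_pair a b.
have p_new : p \notin inner S.
  by rewrite inE /p /sorted_pair; case: ifP => _ /=; rewrite (negbTE bS) ?andbF.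
have p_inner : p |: inner S \subset inner (b |: S).
  rewrite subUset sub1set; apply/andP; split.
    rewrite inE mem_edges_sorted // eab /p /sorted_pair.
    by case: ifP => _; rewrite !in_setU1 eqxx aS !orbT.
  by apply/subsetP => q; rewrite !inE => /and3P[-> -> ->]; rewrite !orbT.
exists (b |: S); split; first by rewrite cardsU1 bS cS.
by apply: leq_trans (subset_leq_card p_inner); rewrite cardsU1 p_new.
Qed.

End Connected.

Lemma tree_no_triangle n (e : rel 'I_n) x v y :
  is_tree e -> e x v -> e v y -> x != y -> ~~ e x y.
Proof.
move=> [[e_irr e_sym] [e_conn e_card]] exv evy xy; apply/negP => exy.
pose xy_edge a b := ((a == x) && (b == y)) || ((a == y) && (b == x)).
pose e0 : rel 'I_n := fun a b => e a b && ~~ xy_edge a b.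
have e0_sym : symmetric e0.
  move=> a b; rewrite /e0 /xy_edge e_sym.
  by case: (a == x); case: (a == y); case: (b == x); case: (b == y).
have xv : x != v by apply: contraTneq exv => ->; rewrite e_irr.
have yv : y != v by apply: contraTneq evy => ->; rewrite e_irr.
have e0_xy : connect e0 x y.
  apply: (@connect_trans _ _ v); apply: connect1.
    by rewrite /e0 /xy_edge exv eqxx (eq_sym v) (negbTE yv) (negbTE xy) !andbF.
  by rewrite /e0 /xy_edge evy (eq_sym v) (negbTE xv) (eq_sym v) (negbTE yv).
have e0_conn a b : connect e0 a b.
  apply: connect_sub (e_conn a b) => c d ecd.
  have [|not_xy] := boolP (xy_edge c d); last by apply: connect1; rewrite /e0 ecd not_xy.
  by case/orP => /andP[/eqP -> /eqP ->]; last rewrite (sym_connect_sym e0_sym).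
have : edges e0 \proper edges e.
  apply/properP; split; first by apply/subsetP => p; rewrite !inE => /andP[-> /andP[]].
  exists (sorted_pair x y); first by rewrite mem_edges_sorted.
  by rewrite inE /e0 /xy_edge /sorted_pair; case: ifP => _ /=; rewrite !eqxx ?orbT !andbF.
by move=> /proper_card; have := connected_edges_geq e0_sym e0_conn; rewrite e_card; lia.
Qed.

Lemma tree_deg_gt0 n (e : rel 'I_n) u : is_tree e -> 1 < n -> 0 < deg e u.
Proof.
move=> [_ [e_conn _]] n_gt1.
have /card_gt0P [u' u'_ne] : 0 < #|[set~ u]| by rewrite cardsC1 card_ord; lia.
have u'_out : u' \notin [set u] by rewrite in_set1 -in_setC1.
have [a [b [/set1P -> _ eub]]] := connect_crossing (e_conn u u') (set11 u) u'_out.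
exact: deg_gt0 eub.
Qed.

Definition n3 n (e : rel 'I_n) : nat := #|[set v | deg e v == 3]|.

Lemma chemical_tree_degree_count n (e : rel 'I_n) :
  chemical_tree e -> 1 < n -> n + n3 e = 3 * nbranch e + n2 e + 2.
Proof.
move=> [T deg_le4] n_gt1; have [[e_irr e_sym] [_ e_card]] := T.
have sums : \sum_u (deg e u + (deg e u == 3)) =
            \sum_u ((2 < deg e u) * 3 + (deg e u == 2) + 1).
  apply: eq_bigr => u _; move: (tree_deg_gt0 u T n_gt1) (deg_le4 u).
  by case: (deg e u) => [|[|[|[|[|k]]]]].
have branch3 : \sum_u (2 < deg e u) * 3 = nbranch e * 3.
  by rewrite /nbranch -sum_nat_card big_distrl.
rewrite !big_split /= branch3 handshake // e_card sum1_card card_ord !sum_nat_card in sums.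
rewrite /n3 /n2; lia.
Qed.

Section Reattach.
Variables (n : nat) (e : rel 'I_n) (v x y w : 'I_n).
Hypotheses (e_irr : irreflexive e) (e_sym : symmetric e).
Hypothesis e_v : forall u, e v u = (u == x) || (u == y).
Hypotheses (xy : x != y) (not_exy : ~~ e x y) (vw : v != w).

Definition reattach : rel 'I_n := fun a b =>
  if (a == v) || (b == v) then ((a == v) && (b == w)) || ((a == w) && (b == v))
  else [|| e a b, (a == x) && (b == y) | (a == y) && (b == x)].

Local Notation e' := reattach.

Lemma reattach_neq_xv : x != v.
Proof. by apply: contraFneq (e_irr v) => xv; rewrite -{2}xv e_v eqxx. Qed.

Lemma reattach_neq_yv : y != v.
Proof. by apply: contraFneq (e_irr v) => yv; rewrite -{2}yv e_v eqxx orbT. Qed.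

Lemma adj_v_nat u : (e u v : nat) = (u == x) + (u == y).
Proof.
rewrite e_sym e_v; case: (eqVneq u x) => [->|_]; first by rewrite (negbTE xy).
by case: (u == y).
Qed.

Lemma deg_v : deg e v = 2.
Proof.
rewrite /deg (_ : [set u | e v u] = [set x; y]); last by apply/setP => u; rewrite !inE e_v.
by rewrite cards2 xy.
Qed.

Lemma sum_adj_v F : \sum_b e v b * F b = F x + F y.
Proof.
rewrite -(sum_eq_muln x F) -(sum_eq_muln y F) -big_split /=.
by apply: eq_bigr => b _; rewrite e_sym adj_v_nat mulnDl.
Qed.

Lemma reattach_sym : symmetric e'.
Proof.
move=> a b; rewrite /reattach e_sym orbC.
by case: (a == v); case: (b == v); case: (a == w); case: (b == w);
   case: (a == x); case: (b == x); case: (a == y); case: (b == y).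
Qed.

Lemma reattach_irr : irreflexive e'.
Proof.
move=> a; rewrite /reattach e_irr; case: (eqVneq a v) => [->|_] /=.
  by rewrite (negbTE vw).
by case: (eqVneq a x) => [->|_]; rewrite ?andbF // (negbTE xy).
Qed.

Lemma reattachE a b :
  e' a b + (a == v) * e a b + (b == v) * e a b =
  e a b + ((a == x) && (b == y)) + ((a == y) && (b == x))
        + ((a == v) && (b == w)) + ((a == w) && (b == v)).
Proof.
have [xv yv] := (reattach_neq_xv, reattach_neq_yv).
rewrite /reattach; case: (eqVneq a v) => [->|_] /=.
  rewrite (eq_sym v x) (negbTE xv) (eq_sym v y) (negbTE yv) (negbTE vw) /=.
  by case: (eqVneq b v) => [->|_]; rewrite ?e_irr ?(negbTE vw) /=; lia.
case: (eqVneq b v) => [->|_] /=.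
  by rewrite (eq_sym v x) (negbTE xv) (eq_sym v y) (negbTE yv) !andbF andbT; lia.
have not_xy_ab : ~~ (e a b && ((a == x) && (b == y))).
  by apply/negP => /and3P[eab /eqP ax /eqP yb]; move: not_exy; rewrite -ax -yb eab.
have not_yx_ab : ~~ (e a b && ((a == y) && (b == x))).
  by apply/negP => /and3P[eab /eqP ay /eqP bx]; move: not_exy; rewrite e_sym -ay -bx eab.
have not_both : ~~ ((a == x) && (a == y)).
  by apply/negP => /andP[/eqP -> /eqP xy']; move: xy; rewrite xy' eqxx.
move: not_xy_ab not_yx_ab not_both; rewrite andbF.
by case: (e a b); case: (a == x); case: (b == y); case: (a == y); case: (b == x).
Qed.

Lemma deg_reattach u : deg e' u + (u == v) = deg e u + (u == w).
Proof.
have sums : \sum_b (e' u b + (u == v) * e u b + (b == v) * e u b) =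
    \sum_b (e u b + ((u == x) && (b == y)) + ((u == y) && (b == x))
                  + ((u == v) && (b == w)) + ((u == w) && (b == v))).
  by apply: eq_bigr => b _; exact: reattachE.
rewrite !big_split /= -big_distrr /= sum_eq_muln !sum_andb_eqn -!deg_sum in sums.
have deg_uv : (u == v) * deg e u = (u == v) * 2.
  by case: eqVneq => [->|_]; rewrite ?deg_v.
move: sums; rewrite deg_uv adj_v_nat; lia.
Qed.

Lemma reattach_connected :
  (forall a b, connect e a b) -> forall a b, connect e' a b.
Proof.
move=> e_conn; have [xv yv] := (reattach_neq_xv, reattach_neq_yv).
have e'_csym := sym_connect_sym reattach_sym.
pose h u := if u == v then x else u.
have from_x b : e v b -> connect e' x b.
  rewrite e_v => /orP[/eqP -> | /eqP ->]; first exact: connect0.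
  by apply: connect1; rewrite /reattach (negbTE xv) (negbTE yv) !eqxx orbT.
have h_edge a b : e a b -> connect e' (h a) (h b).
  rewrite /h; case: (eqVneq a v) => [-> | av] eab.
    by rewrite ifN; [exact: from_x | apply: contraTneq eab => ->; rewrite e_irr].
  case: (eqVneq b v) => [bv | bv].
    by rewrite e'_csym; apply: from_x; rewrite e_sym -bv.
  by apply: connect1; rewrite /reattach (negbTE av) (negbTE bv) eab.
have to_h u : connect e' u (h u).
  rewrite /h; case: eqVneq => [-> | _]; last exact: connect0.
  apply: (@connect_trans _ _ w); first by apply: connect1; rewrite /reattach !eqxx.
  by have := connect_homo h_edge (e_conn w x); rewrite /h eq_sym (negbTE vw) ifN.
move=> a b; apply: connect_trans (to_h a) _.
by apply: connect_trans (connect_homo h_edge (e_conn a b)) _; rewrite e'_csym.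
Qed.

Lemma reattach_tree : is_tree e -> is_tree e'.
Proof.
move=> [_ [e_conn e_card]]; split; first by split; [exact: reattach_irr | exact: reattach_sym].
split; first exact: reattach_connected.
have sums : \sum_u (deg e' u + (u == v)) = \sum_u (deg e u + (u == w)).
  by apply: eq_bigr => u _; exact: deg_reattach.
move: sums; rewrite !big_split /= !sum_eqn (handshake reattach_irr reattach_sym).
by rewrite handshake // e_card => /addIn /eqP; rewrite eqn_pmul2l // => /eqP.
Qed.

Lemma M1_reattach : M1 e' + 2 = M1 e + 2 * deg e w.
Proof.
have sq u : deg e' u ^ 2 + (u == v) * (2 * deg e' u + 1) =
            deg e u ^ 2 + (u == w) * (2 * deg e u + 1).
  by have := deg_reattach u; case: (u == v); case: (u == w); nia.
have sums : \sum_u (deg e' u ^ 2 + (u == v) * (2 * deg e' u + 1)) =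
            \sum_u (deg e u ^ 2 + (u == w) * (2 * deg e u + 1)).
  by apply: eq_bigr => u _; exact: sq.
move: sums; rewrite !big_split /= !sum_eq_muln -/(M1 e') -/(M1 e).
by have := deg_reattach v; rewrite eqxx (negbTE vw) deg_v; lia.
Qed.

Lemma M2_reattach :
  M2 e' + 2 * (deg e' x + deg e' y) =
  M2 e + \sum_b e w b * deg e b + deg e' x * deg e' y + deg e' w.
Proof.
pose d' := deg e'; pose W a b := d' a * d' b.
have d'v : d' v = 1 by have := deg_reattach v; rewrite /d' eqxx (negbTE vw) deg_v; lia.
have col_v F : \sum_a e a v * F a = F x + F y.
  by rewrite -sum_adj_v; apply: eq_bigr => a _; rewrite e_sym.
(* [edit] accounts for the new edges ([xy] and [vw] replace [xv] and [vy]),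
   [bump] for the new degrees ([d' + [v] = d + [w]]). *)
have edit : \sum_a \sum_b (e' a b * W a b + (a == v) * (e a b * W a b)
                                        + (b == v) * (e a b * W a b)) =
            \sum_a \sum_b (e a b * W a b + ((a == x) && (b == y)) * W a b
              + ((a == y) && (b == x)) * W a b + ((a == v) && (b == w)) * W a b
              + ((a == w) && (b == v)) * W a b).
  apply: eq_bigr => a _; apply: eq_bigr => b _.
  by rewrite !mulnA -!mulnDl reattachE.
rewrite !dsumD dsum_row dsum_col !dsum_pt sum_adj_v col_v in edit.
rewrite /W (sum_adj_M2 reattach_irr reattach_sym) -/d' d'v in edit.
have bump : \sum_a \sum_b e a b * W a b + 2 * \sum_b e v b * d' b =
            2 * M2 e + 2 * \sum_b e w b * deg e b.
  rewrite -sum_adj_bump // -sum_adj_M2 // -sum_adj_bump //.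
  by apply: eq_bigr => a _; apply: eq_bigr => b _; rewrite /d' !deg_reattach.
rewrite sum_adj_v in bump; move: edit bump; rewrite /W /d'; nia.
Qed.

End Reattach.

Lemma reattach_improves n b (e : rel 'I_n) v w :
  in_CT b e -> deg e v = 2 -> deg e w = 3 ->
  exists e' : rel 'I_n, [/\ in_CT b e', M1 e < M1 e' & M2 e < M2 e'].
Proof.
move=> [[T deg_le4] nb] dv dw; have [[e_irr e_sym] _] := T.
have /cards2P [x [y [xy Nv]]] : #|[set u | e v u]| == 2 by rewrite -/(deg e v) dv.
have e_v u : e v u = (u == x) || (u == y) by rewrite -in_set2 -Nv inE.
have exv : e x v by rewrite e_sym e_v eqxx.
have evy : e v y by rewrite e_v eqxx orbT.
have eyv : e y v by rewrite e_sym.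
have not_exy : ~~ e x y := tree_no_triangle T exv evy xy.
have vw : v != w by apply/eqP => vw; move: dv; rewrite vw dw.
pose e' := reattach e v x y w.
have deg' u : deg e' u + (u == v) = deg e u + (u == w).
  exact: deg_reattach e_irr e_sym e_v xy not_exy vw u.
have deg'E u : deg e' u = if u == v then 1 else if u == w then 4 else deg e u.
  move: (deg' u); case: (eqVneq u v) => [->|_]; first by rewrite dv (negbTE vw); lia.
  by case: (eqVneq u w) => [->|_]; rewrite ?dw; lia.
exists e'; split.
- split; last first.
    rewrite -nb; apply: eq_card => u; rewrite !inE deg'E.
    by case: (eqVneq u v) => [->|_]; [rewrite dv | case: (eqVneq u w) => [->|_]; rewrite ?dw].
  split; first exact: reattach_tree.
  by move=> u; rewrite deg'E; case: ifP => // _; case: ifP.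
- by have := M1_reattach e_irr e_sym e_v xy not_exy vw; rewrite /e' dw; lia.
- have N_ge : 3 + e w v <= \sum_c e w c * deg e c.
    rewrite -dw; apply: deg_add_adj_leq => c ewc.
    case: (eqVneq c v) => [->|_]; first by rewrite dv.
    by rewrite addn0; apply: deg_gt0 (_ : e c w); rewrite e_sym.
  have := M2_reattach e_irr e_sym e_v xy not_exy vw; rewrite -/e' !deg'E.
  move: N_ge (deg_le4 x) (deg_le4 y) (deg_gt0 exv) (deg_gt0 eyv).
  rewrite (adj_v_nat e_sym e_v xy) (negbTE (reattach_neq_xv e_irr e_v)).
  rewrite (negbTE (reattach_neq_yv e_irr e_v)) [w == v]eq_sym (negbTE vw) eqxx.
  by rewrite (eq_sym w x) (eq_sym w y); case: (x == w); case: (y == w); nia.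
Qed.

Theorem lemma9 (n b : nat) (e : rel 'I_n) :
  1 <= b -> 2 * b + 2 < n ->
  (is_max_CT b (@M1 n) e \/ is_max_CT b (@M2 n) e) ->
  (0 < n2 e <-> 3 * b + 2 < n).
Proof.
move=> _ n_big e_max.
have [CT_e no_better] : in_CT b e /\
    forall e' : rel 'I_n, in_CT b e' -> M1 e < M1 e' -> M2 e < M2 e' -> False.
  case: e_max => -[CT_e e_max]; split=> // e' CT_e' lt1 lt2.
    by move: (e_max e' CT_e'); rewrite leqNgt lt1.
  by move: (e_max e' CT_e'); rewrite leqNgt lt2.
have n_gt1 : 1 < n by lia.
have := chemical_tree_degree_count CT_e.1 n_gt1; rewrite CT_e.2 => count.
split=> [n2_gt0 | ]; last by move=> ?; lia.
rewrite ltnNge; apply/negP => n_small.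
have /card_gt0P [w] : 0 < n3 e by lia.
have /card_gt0P [v] := n2_gt0.
rewrite !inE => /eqP dv /eqP dw.
by have [e' [CT_e' lt1 lt2]] := reattach_improves CT_e dv dw; apply: (no_better e').
Qed.
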